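(* Let $\mathcal{A}\subset\mathbb{Z}$ be a finite alphabet, let $G=(V,E)$ be a finite directed graph with edge labelling $\ell:E\to\mathcal{A}$ whose adjacency matrix $M=\sum_{a\in\mathcal{A}}M_a$ is primitive, let $\beta>1$ be a Pisot number, and let $\phi^+:\mathcal{K}^+\to\mathbb{R}$ be as in the context. Then $\phi^+(\mathcal{K}^+)$ is finite if and only if for every vertex $v\in V$ there exists $c(v)\in\mathbb{R}$ such that for every path $e_1e_2\ldots e_n$ ($n\ge1$) in $G$ connecting $v$ to itself, $$c(v)=\frac{1}{1-\beta^{-n}}\sum_{k=1}^n\frac{\ell(e_k)}{\beta^k}.$$
   Context: For $a\in\mathcal{A}$, $M_a$ is the $V\times V$ matrix with $(M_a)_{ij}=1$ if $(i,j)\in E$ and $\ell((i,j))=a$, and $0$ otherwise. A path is a sequence of edges with the terminal vertex of $e_j$ equal to the initial vertex of $e_{j+1}$; it connects the initial vertex of $e_1$ to the terminal vertex of $e_n$. $\mathcal{K}^+\subseteq\mathcal{A}^{\mathbb{N}}$ is the set of sequences $(\ell(e_k))_{k\ge1}$ for infinite paths $e_1e_2\ldots$ in $G$. A Pisot number is an algebraic integer $>1$ all of whose other Galois conjugates have modulus $<1$ (integers $\ge2$ included). $\phi^+((x_k)_{k\ge1})=\sum_{k\ge1}x_k\beta^{-k}$. *)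

From HB Require Import structures.
From mathcomp Require Import all_boot all_order all_algebra.
From mathcomp Require Import all_classical all_reals all_analysis.
From mathcomp Require Import complex.
Set Implicit Arguments. Unset Strict Implicit. Unset Printing Implicit Defensive.
Import Order.TTheory GRing.Theory Num.Theory.
Local Open Scope ring_scope.
Local Open Scope classical_set_scope.

(* Vertices are 'I_n; edges E : {set 'I_n * 'I_n} (E ⊆ V×V);
   labelling lab : 'I_n * 'I_n -> int (only its values on E matter). *)

Definition Mlab (n : nat) (E : {set 'I_n * 'I_n}) (lab : 'I_n * 'I_n -> int)
  (a : int) : 'M[int]_n :=
  \matrix_(i, j) (((i, j) \in E) && (lab (i, j) == a))%:R.

Definition adjM (n : nat) (A : seq int) (E : {set 'I_n * 'I_n})
  (lab : 'I_n * 'I_n -> int) : 'M[int]_n :=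
  \sum_(a <- A) Mlab E lab a.

Definition mxpow (n : nat) (M : 'M[int]_n) (k : nat) : 'M[int]_n :=
  iter k (mulmx M) 1%:M.

Definition primitive_mx (n : nat) (M : 'M[int]_n) : Prop :=
  exists k : nat, (0 < k)%N /\ forall i j, 0 < mxpow M k i j.

Definition pisot (R : realType) (beta : R) : Prop :=
  1 < beta /\
  exists p : {poly int},
    [/\ p \is monic,
        irreducible_poly (map_poly (intr : int -> rat) p),
        root (map_poly (intr : int -> R) p) beta &
        forall z : R[i], root (map_poly (intr : int -> R[i]) p) z ->
          z != (beta%:C)%C -> `|z| < 1].

(* K^+ : label sequences of infinite paths. Index shift: x k (k >= 0)
   stands for x_{k+1}, and e k for e_{k+1}. *)
Definition Kplus (n : nat) (E : {set 'I_n * 'I_n}) (lab : 'I_n * 'I_n -> int)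
  : set (nat -> int) :=
  [set x | exists e : nat -> 'I_n * 'I_n,
     [/\ forall k, e k \in E,
         forall k, (e k).2 = (e k.+1).1 &
         x = (fun k => lab (e k))]].

Definition phiplus (R : realType) (beta : R) (x : nat -> int) : R :=
  limn (fun N => \sum_(k < N) ((x k)%:~R * beta ^- k.+1)).

(* e0 :: s is a path (of length size s + 1 >= 1) in G from v to v *)
Definition loop_at (n : nat) (E : {set 'I_n * 'I_n}) (v : 'I_n)
  (e0 : 'I_n * 'I_n) (s : seq ('I_n * 'I_n)) : bool :=
  [&& e0.1 == v, (last e0 s).2 == v, all (fun e => e \in E) (e0 :: s) &
      path (fun e f => e.2 == f.1) e0 s].

From HB Require Import structures.
From mathcomp Require Import all_boot all_order all_algebra.
From mathcomp Require Import all_classical all_reals all_analysis.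
From mathcomp Require Import complex.
From mathcomp Require Import ring.
Set Implicit Arguments. Unset Strict Implicit. Unset Printing Implicit Defensive.
Import Order.TTheory GRing.Theory Num.Theory numFieldNormedType.Exports.
Local Open Scope ring_scope.
Local Open Scope classical_set_scope.

(* If P and Q are loops at the same vertex, the infinite paths P^k Q^oo have
   values lv(P) + r^k (lv(Q) - lv(P)) with r = beta^-|P| in (0, 1), where
   lv(L) is the value of the periodic path L L L ...  These are pairwise distinct
   unless lv(P) = lv(Q), so finiteness forces all loops at a vertex to have the
   same value c(v).  Conversely, closing an edge p into a loop (the graph is
   strongly connected) and rotating that loop gives
   c(p.1) = (lab p + c(p.2)) / beta; unrolling this recurrence along an
   infinite path shows that its value is c of its initial vertex, so the image
   of phi^+ lies in the finite set c(V). *)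

Section BetaExpansion.
Variables (R : realType) (beta : R).
Hypothesis beta_gt1 : 1 < beta.

Definition phisum (x : nat -> int) (N : nat) : R :=
  \sum_(k < N) ((x k)%:~R * beta ^- k.+1).

Lemma beta_gt0 : 0 < beta. Proof. exact: lt_trans beta_gt1. Qed.

Lemma invexp_gt0 N : 0 < beta ^- N.
Proof. by rewrite invr_gt0 exprn_gt0 // beta_gt0. Qed.

Lemma invexp_lt1 N : (0 < N)%N -> beta ^- N < 1.
Proof. by move=> N_gt0; rewrite invf_lt1 ?exprn_gt0 ?beta_gt0 // exprn_egt1 -?lt0n. Qed.

Lemma sum_invexp_le N : \sum_(k < N) beta ^- k.+1 <= (beta - 1)^-1.
Proof.
have beta1_gt0 : 0 < beta - 1 by rewrite subr_gt0.
have sum_invexp : \sum_(k < N) beta ^- k.+1 = (1 - beta ^- N) / (beta - 1).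
  elim: N => [|N IH]; first by rewrite big_ord0 expr0 invr1 subrr mul0r.
  rewrite big_ord_recr /= IH exprS invfM.
  by field; rewrite !gt_eqF ?exprn_gt0 ?beta_gt0.
rewrite sum_invexp ler_pdivrMr // mulVf ?gt_eqF //.
by rewrite gerBl ltW ?invexp_gt0.
Qed.

Lemma phisum_split x N M :
  phisum x (N + M) = phisum x N + beta ^- N * phisum (fun k => x (k + N)%N) M.
Proof.
rewrite /phisum big_split_ord /=; congr (_ + _).
rewrite mulr_sumr; apply: eq_bigr => i _ /=.
by rewrite (addnC i) -addnS exprD invfM mulrCA.
Qed.

Section Bounded.
Variables (x : nat -> int) (B : R).
Hypothesis x_le : forall k, `|(x k)%:~R : R| <= B.

Let B_ge0 : 0 <= B. Proof. exact: le_trans (x_le 0). Qed.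

Lemma norm_phisum_le N : `|phisum x N| <= B / (beta - 1).
Proof.
apply: le_trans (ler_norm_sum _ _ _) _.
apply: (@le_trans _ _ (\sum_(k < N) B * beta ^- k.+1)).
  apply: ler_sum => k _.
  by rewrite normrM (gtr0_norm (invexp_gt0 _)) ler_pM2r ?invexp_gt0.
by rewrite -mulr_sumr ler_wpM2l ?sum_invexp_le.
Qed.

Lemma is_cvg_phisum : cvgn (phisum x).
Proof.
have -> : phisum x = series (fun k => (x k)%:~R * beta ^- k.+1).
  by apply/funext => N; rewrite seriesEord.
apply: normed_cvg.
have beta_inv : `|beta^-1| < 1.
  by rewrite gtr0_norm ?invr_gt0 ?beta_gt0 // invf_lt1 ?beta_gt0.
apply: (@series_le_cvg _ _ (geometric (B / beta) beta^-1)).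
4: exact: is_cvg_geometric_series.
all: move=> k /=.
- exact: normr_ge0.
- by rewrite mulr_ge0 ?divr_ge0 ?exprn_ge0 ?invr_ge0 // ltW ?beta_gt0.
- rewrite normrM (gtr0_norm (invexp_gt0 _)) exprS invfM exprVn mulrA.
  by rewrite ler_pM2r ?invexp_gt0 // ler_pM2r ?invr_gt0 ?beta_gt0.
Qed.

Lemma norm_phiplus_le : `|phiplus beta x| <= B / (beta - 1).
Proof.
have := norm_phisum_le; rewrite /phiplus -/(phisum x) => phisum_le.
rewrite ler_norml; apply/andP; split.
  apply: limr_ge is_cvg_phisum _; apply: nearW => N.
  by have := phisum_le N; rewrite ler_norml => /andP[].
apply: limr_le is_cvg_phisum _; apply: nearW => N.
by have := phisum_le N; rewrite ler_norml => /andP[].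
Qed.

End Bounded.

Lemma phiplus_shift x (B : R) N : (forall k, `|(x k)%:~R : R| <= B) ->
  phiplus beta x = phisum x N + beta ^- N * phiplus beta (fun k => x (k + N)%N).
Proof.
move=> x_le.
change (limn (phisum x) = phisum x N + beta ^- N * limn (phisum (fun k => x (k + N)%N))).
apply: cvg_lim => //; rewrite -(cvg_shiftn N) /=.
under eq_fun do rewrite addnC phisum_split.
apply: cvgD; first exact: cvg_cst.
apply: cvgM; [exact: cvg_cst | exact: (is_cvg_phisum (fun k => x_le (k + N)%N))].
Qed.

Lemma phiplus_periodic x (B : R) m : (forall k, `|(x k)%:~R : R| <= B) ->
  (0 < m)%N -> (forall k, x (k + m)%N = x k) ->
  phiplus beta x = (1 - beta ^- m)^-1 * phisum x m.
Proof.
move=> x_le m_gt0 x_per.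
have shift_id : (fun k => x (k + m)%N) = x by apply/funext => k; rewrite x_per.
have := phiplus_shift m x_le; rewrite shift_id => phi_eq.
have r_neq1 : 1 - beta ^- m != 0 by rewrite subr_eq0 eq_sym lt_eqF ?invexp_lt1.
apply: (mulfI r_neq1); rewrite mulrA mulfV // mul1r.
by rewrite mulrBl mul1r {1}phi_eq addrK.
Qed.

Lemma phiplus_recurrence x (y : nat -> R) (B C : R) :
  (forall k, `|(x k)%:~R : R| <= B) -> (forall k, `|y k| <= C) ->
  (forall k, y k = ((x k)%:~R + y k.+1) / beta) ->
  phiplus beta x = y 0%N.
Proof.
move=> x_le y_le y_rec.
have beta_neq0 : beta != 0 by rewrite gt_eqF ?beta_gt0.
have y0_split N : y 0%N = phisum x N + beta ^- N * y N.
  elim: N => [|N IH]; first by rewrite /phisum big_ord0 expr0 invr1 mul1r add0r.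
  rewrite IH {1}y_rec /phisum big_ord_recr /= exprS invfM.
  by field; rewrite beta_neq0 expf_neq0.
set K := B / (beta - 1) + C.
have dist_le N : `|phiplus beta x - y 0%N| <= K * beta^-1 ^+ N.
  rewrite (phiplus_shift N x_le) (y0_split N) opprD addrACA subrr add0r -mulrBr.
  rewrite normrM (gtr0_norm (invexp_gt0 _)) exprVn mulrC ler_pM2r ?invexp_gt0 //.
  apply: le_trans (ler_normB _ _) (lerD _ (y_le N)).
  exact: (norm_phiplus_le (fun k => x_le (k + N)%N)).
have K_expr_cvg0 : (fun N => K * beta^-1 ^+ N) @ \oo --> (0 : R).
  rewrite -(mulr0 K); apply: cvgM; first exact: cvg_cst.
  apply: cvg_expr.
  by rewrite gtr0_norm ?invr_gt0 ?beta_gt0 // invf_lt1 ?beta_gt0.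
apply/eqP; rewrite -subr_eq0 -normr_le0.
rewrite -(cvg_lim _ K_expr_cvg0) //; apply: limr_ge; first by apply/cvg_ex; exists 0.
exact: nearW.
Qed.

End BetaExpansion.

Section Loops.
Variables (n : nat) (E : {set 'I_n * 'I_n}).
Local Notation edge := ('I_n * 'I_n)%type.

Definition infinite_path (e : nat -> edge) : Prop :=
  (forall k, e k \in E) /\ (forall k, (e k).2 = (e k.+1).1).

Section OneLoop.
Variables (e0 : edge) (s : seq edge).

Definition prepend_loop (f : nat -> edge) (i : nat) : edge :=
  if (i < size (e0 :: s))%N then nth e0 (e0 :: s) i else f (i - size (e0 :: s))%N.

Definition loop_cycle (i : nat) : edge := nth e0 (e0 :: s) (i %% size (e0 :: s)).

Variable v : 'I_n.
Hypothesis loop_v : loop_at E v e0 s.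

Lemma loop_start : e0.1 = v.
Proof. by case/and4P: loop_v => /eqP. Qed.

Lemma loop_end : (nth e0 (e0 :: s) (size s)).2 = v.
Proof.
by case/and4P: loop_v => _ /eqP <- _ _; rewrite -[size s]/((size (e0 :: s)).-1) nth_last.
Qed.

Lemma loop_edge_in j : nth e0 (e0 :: s) j \in E.
Proof.
case/and4P: loop_v => _ _ /allP loop_in _.
have [j_lt|j_ge] := ltnP j (size (e0 :: s)); first exact/loop_in/mem_nth.
by rewrite nth_default // loop_in ?mem_head.
Qed.

Lemma loop_edge_next j : (j < size s)%N ->
  (nth e0 (e0 :: s) j).2 = (nth e0 (e0 :: s) j.+1).1.
Proof.
by case/and4P: loop_v => _ _ _ /(pathP e0) loop_path j_lt; apply/eqP/loop_path.
Qed.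

Lemma prepend_loop_path f : infinite_path f -> (f 0%N).1 = v ->
  infinite_path (prepend_loop f).
Proof.
move=> [f_in f_next] f_start; split=> k; rewrite /prepend_loop.
  by case: ifP => _; [exact: loop_edge_in | exact: f_in].
case: (ltngtP k.+1 (size s).+1) => [k_lt|k_gt|[->]].
- by rewrite loop_edge_next // -ltnS.
- by rewrite subSn ?f_next // -ltnS.
- by rewrite subnn loop_end.
Qed.

Lemma loop_cycle_path : infinite_path loop_cycle.
Proof.
split=> k; rewrite /loop_cycle; first exact: loop_edge_in.
have -> : (k.+1 %% (size s).+1 = (k %% (size s).+1).+1 %% (size s).+1)%N.
  by rewrite -addn1 -modnDml addn1.
have := ltn_mod k (size (e0 :: s)); rewrite /= ltnS leq_eqVlt.
case/orP=> [/eqP ->|k_lt]; first by rewrite modnn loop_end loop_start.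
by rewrite (@modn_small (k %% _).+1) ?loop_edge_next.
Qed.

End OneLoop.

Lemma loop_at_rot v e0 q0 qs :
  loop_at E v e0 (q0 :: qs) -> loop_at E q0.1 q0 (rcons qs e0).
Proof.
case/and4P=> /eqP e0_v /= /eqP last_v /and3P[e0_in q0_in qs_in].
move=> /= /andP[/eqP e0_q0 qs_path].
apply/and4P; split=> //=.
- by rewrite last_rcons e0_q0.
- by rewrite all_rcons e0_in q0_in qs_in.
- by rewrite rcons_path qs_path /= last_v e0_v.
Qed.

Definition walk (i j : 'I_n) (e0 : edge) (s : seq edge) : bool :=
  [&& e0.1 == i, (last e0 s).2 == j, all (fun e => e \in E) (e0 :: s) &
      path (fun e f => e.2 == f.1) e0 s].

Lemma walk_cons i j e q0 qs : e \in E -> e.1 = i -> walk e.2 j q0 qs ->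
  walk i j e (q0 :: qs).
Proof.
move=> e_in <- /and4P[/eqP q0_e last_j qs_in qs_path].
apply/and4P; split=> //; first by rewrite [all _ _]/= e_in.
by rewrite [path _ _ _]/= q0_e eqxx.
Qed.

End Loops.

Section Primitive.
Variables (n : nat) (A : seq int) (E : {set 'I_n * 'I_n}) (lab : 'I_n * 'I_n -> int).
Local Notation M := (adjM A E lab).

Lemma adjM_neq0_edge i j : M i j != 0 -> (i, j) \in E.
Proof.
apply: contraR => ij_notin; rewrite /adjM summxE big1 // => a _.
by rewrite mxE (negbTE ij_notin).
Qed.

Lemma mxpow_neq0_walk k i j : mxpow M k.+1 i j != 0 ->
  exists q0 qs, walk E i j q0 qs.
Proof.
elim: k i j => [|k IH] i j.
  rewrite /mxpow /= mulmx1 => /adjM_neq0_edge ij_in.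
  by exists (i, j), [::]; rewrite /walk /= !eqxx ij_in.
rewrite [mxpow M k.+2]/mxpow iterS -/(mxpow M k.+1) mxE.
have [l|all0] := pickP (fun l => M i l * mxpow M k.+1 l j != 0); last first.
  by rewrite big1 ?eqxx // => l _; apply/eqP/negbFE/all0.
rewrite mulf_eq0 negb_or => /andP[/adjM_neq0_edge il_in /IH[q0 [qs walk_lj]]] _.
by exists (i, l), (q0 :: qs); apply: walk_cons.
Qed.

Lemma primitive_edge_on_loop p : primitive_mx M -> p \in E ->
  exists q0 qs, loop_at E p.1 p (q0 :: qs).
Proof.
case=> -[|k] [// k_gt0 pow_gt0] p_in.
have [q0 [qs walk_p]] := mxpow_neq0_walk (lt0r_neq0 (pow_gt0 p.2 p.1)).
by exists q0, qs; apply: walk_cons.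
Qed.

End Primitive.

Lemma finite_setN_inj_nat T (S : set T) (f : nat -> T) :
  injective f -> (forall k, S (f k)) -> ~ finite_set S.
Proof.
move=> f_inj fS S_fin; apply: infinite_nat.
have -> : [set: nat] = f @^-1` S by apply/seteqP; split=> // k _; exact: fS.
by apply: finite_preimage => // k j _ _; exact: f_inj.
Qed.

Section LoopValues.
Variables (n : nat) (E : {set 'I_n * 'I_n}) (lab : 'I_n * 'I_n -> int).
Variables (R : realType) (beta : R).
Hypothesis beta_gt1 : 1 < beta.
Local Notation edge := ('I_n * 'I_n)%type.

Definition loop_labels (e0 : edge) (s : seq edge) (k : nat) : int :=
  lab (nth e0 (e0 :: s) k).

Definition loop_value (e0 : edge) (s : seq edge) : R :=
  (1 - beta ^- (size s).+1)^-1 * phisum beta (loop_labels e0 s) (size s).+1.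

Lemma lab_le_sum (p : edge) : `|(lab p)%:~R : R| <= \sum_(q : edge) `|(lab q)%:~R : R|.
Proof. by rewrite (bigD1 p) //= lerDl sumr_ge0. Qed.

Lemma phiplus_loop_cycle e0 s :
  phiplus beta (fun k => lab (loop_cycle e0 s k)) = loop_value e0 s.
Proof.
rewrite (phiplus_periodic (m := (size s).+1) beta_gt1 (fun k => lab_le_sum _)) //.
2: by move=> k; rewrite /loop_cycle modnDr.
by congr (_ * _); apply: eq_bigr => i _; rewrite /loop_cycle modn_small.
Qed.

Lemma phiplus_prepend_loop e0 s f :
  phiplus beta (fun k => lab (prepend_loop e0 s f k)) =
  phisum beta (loop_labels e0 s) (size s).+1 +
  beta ^- (size s).+1 * phiplus beta (fun k => lab (f k)).
Proof.
rewrite (phiplus_shift beta_gt1 (size s).+1 (fun k => lab_le_sum _)).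
congr (_ + _ * phiplus _ _); first by apply: eq_bigr => i _; rewrite /prepend_loop ltn_ord.
by apply/funext => k; rewrite /prepend_loop ltnNge leq_addl /= addnK.
Qed.

Lemma loop_value_rot e0 q0 qs :
  loop_value e0 (q0 :: qs) = ((lab e0)%:~R + loop_value q0 (rcons qs e0)) / beta.
Proof.
rewrite /loop_value /phisum /= size_rcons.
set T := \sum_(k < (size qs).+1) (loop_labels q0 qs k)%:~R * beta ^- k.+1.
have beta_neq0 : beta != 0 by rewrite gt_eqF ?(beta_gt0 beta_gt1).
have head_split :
    \sum_(k < (size qs).+2) (loop_labels e0 (q0 :: qs) k)%:~R * beta ^- k.+1
    = ((lab e0)%:~R + T) / beta.
  rewrite big_ord_recl mulrDl /T mulr_suml; congr (_ + _); apply: eq_bigr => i _.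
  rewrite lift0 /loop_labels /= (set_nth_default q0) ?ltn_ord // exprS invfM; ring.
have last_split :
    \sum_(k < (size qs).+2) (loop_labels q0 (rcons qs e0) k)%:~R * beta ^- k.+1
    = T + (lab e0)%:~R * beta ^- (size qs).+2.
  rewrite big_ord_recr /=; congr (_ + _).
    by apply: eq_bigr => i _; rewrite /loop_labels -rcons_cons nth_rcons /= ltn_ord.
  by rewrite /loop_labels -rcons_cons nth_rcons /= ltnn eqxx.
rewrite head_split last_split exprSr invfM; field.
by rewrite beta_neq0 expf_neq0 //= -exprSr subr_eq0 gt_eqF // exprn_egt1.
Qed.

Lemma loop_value_eq v e0 s f0 t :
  finite_set (phiplus beta @` Kplus E lab) ->
  loop_at E v e0 s -> loop_at E v f0 t -> loop_value e0 s = loop_value f0 t.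
Proof.
move=> phi_fin loop_s loop_t.
set r := beta ^- (size s).+1.
pose w k := iter k (prepend_loop e0 s) (loop_cycle f0 t).
have w_path k : infinite_path E (w k) /\ (w k 0%N).1 = v.
  rewrite /w; elim: k => [|k [path_k start_k]] /=.
    by split; [exact: loop_cycle_path loop_t | exact: loop_start loop_t].
  split; last exact: loop_start loop_s.
  exact: (prepend_loop_path loop_s path_k start_k).
pose phi_w k := phiplus beta (fun i => lab (w k i)).
have phisum_s : phisum beta (loop_labels e0 s) (size s).+1 = (1 - r) * loop_value e0 s.
  have r_neq1 : 1 - r != 0 by rewrite subr_eq0 eq_sym lt_eqF ?(invexp_lt1 beta_gt1).
  by rewrite /loop_value -/r mulrA mulfV // mul1r.
have phi_w_geom k :
    phi_w k = loop_value e0 s + r ^+ k * (loop_value f0 t - loop_value e0 s).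
  elim: k => [|k IH]; first by rewrite /phi_w phiplus_loop_cycle; ring.
  by rewrite /phi_w /= phiplus_prepend_loop -/(phi_w k) IH phisum_s -/r exprS; ring.
apply/eqP; apply: contraT => loops_neq; exfalso.
apply: (finite_setN_inj_nat (f := phi_w)) phi_fin => [k j|k].
  rewrite !phi_w_geom => /addrI /mulIf; rewrite subr_eq0 eq_sym => /(_ loops_neq).
  apply: ieexprIn; first by rewrite invexp_gt0.
  by rewrite lt_eqF ?invexp_lt1.
exists (fun i => lab (w k i)) => //.
by case: (w_path k) => -[w_in w_next] _; exists (w k).
Qed.

Section Recurrence.
Variables (A : seq int) (c : 'I_n -> R).
Hypothesis M_prim : primitive_mx (adjM A E lab).
Hypothesis c_loop : forall v e0 s, loop_at E v e0 s -> c v = loop_value e0 s.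

Lemma edge_recurrence p : p \in E -> c p.1 = ((lab p)%:~R + c p.2) / beta.
Proof.
move=> p_in; have [q0 [qs loop_p]] := primitive_edge_on_loop M_prim p_in.
have loop_q0 := loop_at_rot loop_p.
have -> : p.2 = q0.1 by case/and4P: loop_p => _ _ _ /andP[/eqP].
by rewrite (c_loop loop_p) (c_loop loop_q0) loop_value_rot.
Qed.

Lemma phiplus_path e : infinite_path E e ->
  phiplus beta (fun k => lab (e k)) = c (e 0%N).1.
Proof.
move=> [e_in e_next].
apply: (phiplus_recurrence beta_gt1 (fun k => lab_le_sum (e k))
  (y := fun k => c (e k).1) (C := \sum_v `|c v|)) => k.
  by rewrite (bigD1 (e k).1) //= lerDl sumr_ge0.
by rewrite (edge_recurrence (e_in k)) e_next.
Qed.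

End Recurrence.
End LoopValues.

Theorem theorem7 (R : realType) (n : nat) (A : seq int)
  (E : {set 'I_n * 'I_n}) (lab : 'I_n * 'I_n -> int) (beta : R) :
  uniq A ->
  (forall e, e \in E -> lab e \in A) ->
  primitive_mx (adjM A E lab) ->
  pisot beta ->
  finite_set (phiplus beta @` Kplus E lab) <->
  (forall v : 'I_n, exists c : R,
     forall (e0 : 'I_n * 'I_n) (s : seq ('I_n * 'I_n)),
       loop_at E v e0 s ->
       c = (1 - beta ^- (size s).+1)^-1 *
           \sum_(k < (size s).+1) ((lab (nth e0 (e0 :: s) k))%:~R * beta ^- k.+1)).
Proof.
move=> _ _ M_prim [beta_gt1 _]; split=> [phi_fin v | c_loops].
  have [[e0 [s loop_s]]|no_loop] := pselect (exists e0 s, loop_at E v e0 s).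
    exists (loop_value lab beta e0 s) => f0 t loop_t.
    by rewrite (loop_value_eq beta_gt1 phi_fin loop_s loop_t).
  by exists 0 => e0 s loop_s; exfalso; apply: no_loop; exists e0, s.
have [c c_loop] := choice c_loops.
apply: (@sub_finite_set _ _ (c @` [set: 'I_n])); last exact: finite_image.
move=> _ [x [e [e_in e_next ->]] <-]; exists (e 0%N).1 => //.
by rewrite (phiplus_path beta_gt1 M_prim c_loop (conj e_in e_next)).
Qed.
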